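(* Let $F:\mathbb{R}^N\times\mathbb{R}\to\mathbb{R}$ be a generating family for a Legendrian knot with $F(x,t)=x_1$ outside a compact subset of $\mathbb{R}^N\times\mathbb{R}$, and let $w(x,y,t)=F(x,t)-F(y,t)$ on $\mathbb{R}^{2N}\times\mathbb{R}$. Then there exists a fiber preserving diffeomorphism $\varphi:\mathbb{R}^{2N}\times\mathbb{R}\to\mathbb{R}^{2N}\times\mathbb{R}$, $\varphi(x,y,t)=(\Phi(x,y,t),t)$, such that $\alpha=w\circ\varphi$ satisfies $\alpha(x,y,t)=x_1-y_1$ outside a compact subset.
   Context: A generating family: a smooth $F:\mathbb{R}^N\times\mathbb{R}\to\mathbb{R}$, $f_t=F(\cdot,t)$, with $0$ a regular value of $(\partial F/\partial x_1,\dots,\partial F/\partial x_N)$; its fiberwise critical set is immersed as a Legendrian curve in $(\mathbb{R}^3,\ker(dz-y\,dx))$ by $(x,t)\mapsto(t,\partial F/\partial t,F)$. Coordinates on $\mathbb{R}^{2N}$ are $(x,y)$ with $x,y\in\mathbb{R}^N$. *)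

From HB Require Import structures.
From mathcomp Require Import all_boot all_order all_algebra.
From mathcomp Require Import all_classical all_reals all_analysis.
Set Implicit Arguments. Unset Strict Implicit. Unset Printing Implicit Defensive.
Import Order.TTheory GRing.Theory Num.Theory.
Import numFieldNormedType.Exports.
Local Open Scope classical_set_scope.
Local Open Scope ring_scope.

Section Defs.
Variable R : realType.

Fixpoint iterD {V W : normedModType R} (vs : seq V) (f : V -> W) : V -> W :=
  match vs with
  | [::] => f
  | v :: vs' => fun x => derive (iterD vs' f) x v
  end.

Definition smooth {V W : normedModType R} (f : V -> W) : Prop :=
  forall vs : seq V, continuous (iterD vs f) /\ forall x v, derivable (iterD vs f) x v.

Definition diffeomorphism {V : normedModType R} (phi : V -> V) : Prop :=
  exists psi : V -> V, cancel phi psi /\ cancel psi phi /\ smooth phi /\ smooth psi.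

Definition ex {N : nat} (i : 'I_N) : 'rV[R]_N * R := (delta_mx 0 i, 0).
Definition et {N : nat} : 'rV[R]_N * R := (0, 1).

Definition dxF {N : nat} (F : 'rV[R]_N * R -> R) : 'rV[R]_N * R -> 'rV[R]_N :=
  fun p => \row_i derive F p (ex i).

Definition fibcrit {N : nat} (F : 'rV[R]_N * R -> R) : set ('rV[R]_N * R) :=
  [set p | dxF F p = 0].

Definition regular_zero {N : nat} (F : 'rV[R]_N * R -> R) : Prop :=
  forall p, fibcrit F p ->
    forall w : 'rV[R]_N, exists v : 'rV[R]_N * R, derive (dxF F) p v = w.

Definition legmap {N : nat} (F : 'rV[R]_N * R -> R) (p : 'rV[R]_N * R) : R * R * R :=
  (p.2, derive F p et, F p).

(* F is a generating family (smooth, 0 regular value of the x-gradient) whose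
   Legendrian curve is a knot: the critical set is a nonempty connected
   (necessarily 1-dimensional) set on which the Legendrian map is injective. *)
Definition gen_family_knot {N : nat} (F : 'rV[R]_N * R -> R) : Prop :=
  [/\ smooth F, regular_zero F,
      fibcrit F !=set0, connected (fibcrit F)
    & {in fibcrit F &, injective (legmap F)}].

End Defs.

From Pilot Require Import Defs.
From HB Require Import structures.
From mathcomp Require Import all_boot all_order all_algebra.
From mathcomp Require Import all_classical all_reals all_analysis.
Import Order.TTheory GRing.Theory Num.Theory.
Import numFieldNormedType.Exports.
Local Open Scope classical_set_scope.
Local Open Scope ring_scope.

(* Write F = x_1 + g with g compactly supported (only the smoothness of F and
   this normalisation are used).  phi is the composite of two fibre-preserving
   shears, (x, y, t) |-> (x', y, t) with x' = x + g(y,t) e_1, followed by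
   (x', y, t) |-> (x', y', t) with y' = y + g(x',t) e_1; a shear is inverted by
   flipping the sign of g, because g does not depend on the coordinate it moves.
   Then w o phi = x_1 - y_1 + g(y,t) - g(y',t), which vanishes as soon as
   (x',t) lies outside supp g (so y' = y) or both (y,t) and (y',t) do; since g
   is bounded this holds outside a compact set.  Smoothness of the composite is
   proved without Frechet derivatives: a mean value argument along the single
   direction of a shear gives a chain rule for x |-> G (A x + s x *: u). *)

Section SmoothBasics.
Context {R : realType} {V W : normedModType R}.

Lemma iterD_rcons (vs : seq V) (f : V -> W) v :
  Defs.iterD vs (fun x => derive f x v) = Defs.iterD (rcons vs v) f.
Proof. by elim: vs => [//|u vs IH] /=; rewrite IH. Qed.

Lemma smooth_derive {f : V -> W} v :
  smooth f -> smooth (fun x => derive f x v).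
Proof. by move=> sf vs; rewrite iterD_rcons; apply: sf. Qed.

Lemma smooth_continuous {f : V -> W} : smooth f -> continuous f.
Proof. by move=> /(_ [::]) []. Qed.

Lemma smooth_derivable {f : V -> W} x v : smooth f -> derivable f x v.
Proof. by move=> /(_ [::]) [_]; apply. Qed.

Lemma smooth_derive_stable (P : (V -> W) -> Prop) :
  (forall f, P f -> [/\ continuous f, forall x v, derivable f x v &
                        forall v, P (fun x => derive f x v)]) ->
  forall f, P f -> smooth f.
Proof.
move=> PD f Pf vs; suff : P (Defs.iterD vs f) by move=> /PD [].
by elim: vs => [//|v vs IH] /=; have [_ _] := PD _ IH; apply.
Qed.

Lemma is_derive_cvg (f : V -> W) x v df :
  (fun h : R => h^-1 *: ((f \o shift x) (h *: v) - f x)) @ 0^' --> df ->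
  is_derive x v f df.
Proof. by move=> fdf; apply: DeriveDef; [exact: cvgP fdf | exact: cvg_lim fdf]. Qed.

Lemma smooth_cst (c : W) : smooth (fun _ : V => c).
Proof.
apply: (smooth_derive_stable (fun f => exists c, f = cst c)); last by exists c.
move=> _ [{}c ->]; split; [by move=> x; exact: cvg_cst | exact: derivable_cst |].
by move=> v; exists 0; apply/funext => x; exact: derive_cst.
Qed.

End SmoothBasics.

Section SmoothOps.
Context {R : realType} {V W : normedModType R}.

Lemma is_derive_linear {A : V -> W} x v : linear A -> is_derive x v A (A v).
Proof.
move=> lA; apply: is_derive_cvg; apply: cvg_near_cst; near=> h.
rewrite /= lA addrK scalerA mulVf ?scale1r //.
by near: h; exact: nbhs_dnbhs_neq.
Unshelve. all: by end_near.
Qed.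

Lemma smooth_linear (A : V -> W) : linear A -> continuous A -> smooth A.
Proof.
move=> lA cA vs; case/lastP: vs => [|vs v].
  split=> [|x v]; first exact: cA.
  by have dA := is_derive_linear x v lA; exact: ex_derive.
rewrite -iterD_rcons.
have -> : (fun x => derive A x v) = fun=> A v.
  by apply/funext => x; have dA := is_derive_linear x v lA; exact: derive_val.
exact: smooth_cst.
Qed.

Lemma smooth_add {f g : V -> W} :
  smooth f -> smooth g -> smooth (fun x => f x + g x).
Proof.
move=> sf sg.
apply: (smooth_derive_stable (fun h => exists f g,
  [/\ smooth f, smooth g & h = fun x => f x + g x])); last by exists f, g.
move=> _ [{}f [{}g [{}sf {}sg ->]]]; split.
- by move=> x; exact: continuousD (smooth_continuous sf x) (smooth_continuous sg x).
- by move=> x v; exact: derivableD (smooth_derivable x v sf) (smooth_derivable x v sg).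
- move=> v; exists (fun x => derive f x v), (fun x => derive g x v).
  split; [exact: smooth_derive | exact: smooth_derive |].
  apply/funext => x.
  by rewrite deriveD //; exact: smooth_derivable.
Qed.

Lemma is_derive_scaler {a : V -> R} (c : W) {x v : V} :
  derivable a x v -> is_derive x v (fun y => a y *: c) (derive a x v *: c).
Proof.
move=> da; apply: is_derive_cvg.
have -> : (fun h : R => h^-1 *: (((fun y => a y *: c) \o shift x) (h *: v) - a x *: c)) =
    (fun h : R => (h^-1 *: ((a \o shift x) (h *: v) - a x)) *: c).
  by apply/funext => h /=; rewrite -scalerBl scalerA.
exact: cvgZr_tmp da.
Qed.

Lemma smooth_scaler (a : V -> R) (c : W) :
  smooth a -> smooth (fun x => a x *: c).
Proof.
move=> sa.
apply: (smooth_derive_stable (fun h => exists a : V -> R,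
  smooth a /\ h = fun x => a x *: c)); last by exists a.
move=> _ [{}a [{}sa ->]].
have da (x v : V) := is_derive_scaler c (smooth_derivable x v sa).
split.
- by move=> x; apply: continuousZr_tmp; exact: smooth_continuous sa x.
- by move=> x v; exact: ex_derive.
- move=> v; exists (fun x => derive a x v); split; first exact: smooth_derive.
  by apply/funext => x; exact: derive_val.
Qed.

End SmoothOps.

Section LineChainRule.
Context {R : realType} {V U : normedModType R}.

Lemma is_derive_along_line (G : U -> R) (u y : U) (b : R) :
  derivable G (b *: u + y) u ->
  is_derive b 1 (fun c : R => G (c *: u + y)) (derive G (b *: u + y) u).
Proof.
move=> dG; apply: is_derive_cvg.
have -> : (fun h : R => h^-1 *: (((fun c : R => G (c *: u + y)) \o shift b) (h *: 1)
                                 - G (b *: u + y))) =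
          (fun h : R => h^-1 *: ((G \o shift (b *: u + y)) (h *: u) - G (b *: u + y))).
  by apply/funext => h /=; rewrite [h *: 1]mulr1 scalerDl addrA.
exact: dG.
Qed.

Lemma mvt_along_line {G : U -> R} (u y : U) (d : R) : smooth G ->
  exists th : R, `|th| <= `|d| /\ G (d *: u + y) - G y = derive G (th *: u + y) u * d.
Proof.
move=> sG.
have dG (b : R) :
    is_derive b (1 : R) (fun c : R => G (c *: u + y)) (derive G (b *: u + y) u).
  by apply: is_derive_along_line; exact: smooth_derivable.
have cG (I : set R) : {within I, continuous (fun c : R => G (c *: u + y))}.
  apply: continuous_subspaceT => c.
  apply: continuous_comp; last exact: smooth_continuous sG _.
  by apply: continuousD; [exact: continuousZr_tmp | exact: cvg_cst].
have [d0|d0] := leP 0 d.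
  have [c] := MVT_segment d0 (fun c _ => dG c) (cG _).
  rewrite in_itv /= => /andP [c0 cd]; rewrite scale0r add0r subr0 => E.
  by exists c; rewrite (ger0_norm c0) (ger0_norm d0).
have [c] := MVT_segment (ltW d0) (fun c _ => dG c) (cG _).
rewrite in_itv /= => /andP [dc c0]; rewrite scale0r add0r sub0r => E.
exists c; split; first by rewrite (ler0_norm c0) (ltr0_norm d0) lerN2.
by apply: oppr_inj; rewrite opprB E mulrN.
Qed.

Lemma is_derive_comp_line {G : U -> R} {A : V -> U} {s : V -> R} (u : U) {q v : V} :
  smooth G -> continuous s -> derivable s q v -> linear A ->
  is_derive q v (fun x => G (A x + s x *: u))
    (derive G (A q + s q *: u) u * derive s q v + derive G (A q + s q *: u) (A v)).
Proof.
move=> sG cs ds lA; set p := A q + s q *: u.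
pose z h := h *: A v + p.
pose dl h := s (h *: v + q) - s q.
have [th /all_and2 [th_le th_mvt]] :=
  choice (fun h : R => mvt_along_line u (z h) (dl h) sG).
apply: is_derive_cvg.
(* Along the increment, first move by [dl h] in the direction [u] (mean value
   theorem), then by [h *: A v] (a directional derivative of [G] at [p]). *)
have -> : (fun h : R =>
      h^-1 *: (((fun x => G (A x + s x *: u)) \o shift q) (h *: v) - G p)) =
    (fun h => derive G (th h *: u + z h) u * (h^-1 * dl h) + h^-1 *: (G (z h) - G p)).
  apply/funext => h /=.
  have -> : A (h *: v + q) + s (h *: v + q) *: u = dl h *: u + z h.
    by rewrite lA /dl /z /p scalerBl addrCA [A q + _]addrC subrKA addrA addrAC.
  by rewrite -(subrKA (G (z h))) scalerDr th_mvt [_ *: _]mulrCA.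
apply: cvgD; last exact: smooth_derivable p (A v) sG.
apply: cvgM; last exact: ds.
have dl0 : dl @ 0^' --> 0.
  rewrite -[X in _ --> X](subrr (s q)); apply: cvgB; last exact: cvg_cst.
  have cs_line : {for 0, continuous (fun h : R => s (h *: v + q))}.
    apply: continuous_comp; last exact: cs.
    by apply: continuousD; [exact: continuousZr_tmp | exact: cvg_cst].
  by have := (continuous_withinNx _ _).1 cs_line; rewrite scale0r add0r.
have th0 : th @ 0^' --> 0.
  apply/cvgr0Pnorm_le => e e0; move/cvgr0Pnorm_le : dl0 => /(_ e e0).
  by apply: filterS => h; exact: le_trans (th_le h).
have thz_p : (fun h => th h *: u + z h) @ 0^' --> p.
  rewrite -[p]add0r -(scale0r u); apply: cvgD; first exact: cvgZr_tmp.
  rewrite /z -[X in _ --> X]add0r -(scale0r (A v)); apply: cvgD; last exact: cvg_cst.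
  by apply: cvgZr_tmp; apply: cvg_within_filter; exact: cvg_id.
exact: cvg_comp thz_p (smooth_continuous (smooth_derive u sG) p).
Qed.

End LineChainRule.

Section CompLineAlgebra.
Context {R : realType} {V : normedModType R}.

(* By the chain rule above, the derivative of [G (A x + s x *: u)] is a sum of
   products of functions of the same kind and of smooth functions, so this
   algebra is stable under directional derivatives. *)
Inductive comp_line_algebra : (V -> R) -> Prop :=
| CLA_smooth (f : V -> R) : smooth f -> comp_line_algebra f
| CLA_comp (U : normedModType R) (G : U -> R) (A : V -> U) (s : V -> R) (u : U) :
    smooth G -> smooth s -> linear A -> continuous A ->
    comp_line_algebra (fun x => G (A x + s x *: u))
| CLA_add (f g : V -> R) : comp_line_algebra f -> comp_line_algebra g ->
    comp_line_algebra (fun x => f x + g x)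
| CLA_mul (f g : V -> R) : comp_line_algebra f -> comp_line_algebra g ->
    comp_line_algebra (fun x => f x * g x).

Lemma comp_line_algebra_derive (f : V -> R) : comp_line_algebra f ->
  [/\ continuous f, forall x v, derivable f x v &
      forall v, comp_line_algebra (fun x => derive f x v)].
Proof.
elim=> {f}.
- move=> f sf; split; first exact: smooth_continuous sf.
    by move=> x v; exact: smooth_derivable.
  by move=> v; apply: CLA_smooth; exact: smooth_derive.
- move=> U G A s u sG ss lA cA.
  have dGAs (x v : V) := is_derive_comp_line u sG (smooth_continuous ss)
                     (smooth_derivable x v ss) lA.
  split.
  + move=> x; apply: continuous_comp; last exact: smooth_continuous sG _.
    by apply: continuousD; [exact: cA | exact: continuousZr_tmp (smooth_continuous ss x)].
  + by move=> x v; exact: ex_derive.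
  + move=> v; under [fun x => _]funext => x do rewrite derive_val.
    apply: CLA_add; last exact: CLA_comp (smooth_derive _ sG) ss lA cA.
    apply: CLA_mul; first exact: CLA_comp (smooth_derive _ sG) ss lA cA.
    by apply: CLA_smooth; exact: smooth_derive.
- move=> f g _ [cf df Df] _ [cg dg Dg]; split.
  + by move=> x; exact: continuousD (cf x) (cg x).
  + by move=> x v; exact: derivableD (df x v) (dg x v).
  + move=> v; under [fun x => _]funext => x do rewrite (deriveD (df x v) (dg x v)).
    exact: CLA_add.
- move=> f g Cf [cf df Df] Cg [cg dg Dg]; split.
  + by move=> x; exact: continuousM (cf x) (cg x).
  + by move=> x v; exact: derivableM (df x v) (dg x v).
  + move=> v; under [fun x => _]funext => x do rewrite (deriveM (df x v) (dg x v)).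
    by apply: CLA_add; apply: CLA_mul.
Qed.

Lemma smooth_comp_line {U : normedModType R}
    (G : U -> R) (A : V -> U) (s : V -> R) (u : U) :
  smooth G -> smooth s -> linear A -> continuous A ->
  smooth (fun x => G (A x + s x *: u)).
Proof.
move=> sG ss lA cA; apply: (smooth_derive_stable _ comp_line_algebra_derive).
exact: CLA_comp.
Qed.

Lemma smooth_comp_linear {U : normedModType R} (G : U -> R) (A : V -> U) :
  smooth G -> linear A -> continuous A -> smooth (G \o A).
Proof.
move=> sG lA cA.
have -> : G \o A = fun x => G (A x + (0 : R) *: (0 : U)).
  by apply/funext => x; rewrite scaler0 addr0.
exact: smooth_comp_line sG (smooth_cst 0) lA cA.
Qed.

End CompLineAlgebra.

Section Shear.
Context {R : realType} {V : normedModType R}.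

Definition shear (s : V -> R) (c : V) (x : V) : V := x + s x *: c.

Section ShearInverse.
Variables (s : V -> R) (c : V).
Hypothesis s_inv : forall x r, s (x + r *: c) = s x.

Lemma shearK : cancel (shear s c) (shear (fun x => - s x) c).
Proof. by move=> x; rewrite /shear s_inv scaleNr addrK. Qed.

Lemma shearNK : cancel (shear (fun x => - s x) c) (shear s c).
Proof. by move=> x; rewrite /shear s_inv scaleNr subrK. Qed.

End ShearInverse.

Lemma smooth_shear_comp (s1 s2 : V -> R) (c1 c2 : V) :
  smooth s1 -> smooth s2 -> smooth (shear s2 c2 \o shear s1 c1).
Proof.
move=> ss1 ss2; apply: smooth_add; last apply: smooth_scaler.
  apply: smooth_add; last exact: smooth_scaler.
  by apply: smooth_linear => [a x y | x] //; exact: cvg_id.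
by apply: (smooth_comp_line s2 id s1 c1 ss2 ss1) => [a x y | x] //; exact: cvg_id.
Qed.

Lemma diffeomorphism_shear_comp (s1 s2 : V -> R) (c1 c2 : V) :
  smooth s1 -> smooth s2 ->
  (forall x r, s1 (x + r *: c1) = s1 x) -> (forall x r, s2 (x + r *: c2) = s2 x) ->
  diffeomorphism (shear s2 c2 \o shear s1 c1).
Proof.
move=> ss1 ss2 s1_inv s2_inv.
have smoothN (s : V -> R) : smooth s -> smooth (fun x => - s x).
  move=> /(smooth_scaler _ (-1 : R)).
  by under [fun x => _ *: _]funext => x do rewrite [_ *: _]mulrN1.
exists (shear (fun x => - s1 x) c1 \o shear (fun x => - s2 x) c2); split.
  by apply: can_comp; exact: shearK.
split; first by apply: can_comp; exact: shearNK.
by split; apply: smooth_shear_comp => //; exact: smoothN.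
Qed.

End Shear.

Section CompactSupport.
Context {R : realType}.

Lemma compact_support_bounded {T : topologicalType} {g : T -> R} {K : set T} :
  compact K -> continuous g -> (forall p, ~ K p -> g p = 0) ->
  exists M : R, forall p, `|g p| <= M.
Proof.
move=> cK cg g0.
have [M0 [_ M0g]] := compact_bounded (continuous_compact (continuous_subspaceT cg) cK).
exists (`|M0| + 1) => p; have [Kp|nKp] := pselect (K p).
  by apply: M0g; [rewrite ltr_pwDr // ler_norm | exists p].
by rewrite g0 // normr0 addr_ge0.
Qed.

Lemma compact_line_thickening {W : normedModType R} {K : set W} (u : W) (M : R) :
  compact K -> exists2 K' : set W, compact K' &
    forall p c, `|c| <= M -> K (p + c *: u) -> K' p.
Proof.
move=> cK; exists ((fun pc : W * R => pc.1 - pc.2 *: u) @` (K `*` `[- M, M])).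
  apply: continuous_compact; last by apply: compact_setX => //; exact: segment_compact.
  apply: continuous_subspaceT => pc; apply: continuousB; first exact: cvg_fst.
  by apply: continuousZr_tmp; exact: cvg_snd.
move=> p c cM Kpc; exists (p + c *: u, c); last by rewrite /= addrK.
by split=> //=; rewrite in_itv /= -ler_norml.
Qed.

End CompactSupport.

Section Straightening.
Context {R : realType} {N : nat}.
Local Notation X := 'rV[R]_N.+1.
Local Notation U := (X * R)%type.
Local Notation V := ((X * X) * R)%type.

Definition e1 : X := delta_mx 0 ord0.
Definition cx : V := ((e1, 0), 0).
Definition cy : V := ((0, e1), 0).
Definition projx (q : V) : U := (q.1.1, q.2).
Definition projy (q : V) : U := (q.1.2, q.2).

Lemma linear_projx : linear projx. Proof. by []. Qed.
Lemma linear_projy : linear projy. Proof. by []. Qed.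

Lemma continuous_projx : continuous projx.
Proof.
move=> q; apply: (@cvg_pair _ _ _ _ (nbhs q.1.1) (nbhs q.2)); last exact: cvg_snd.
by apply: (@continuous_comp _ _ _ fst fst); exact: cvg_fst.
Qed.

Lemma continuous_projy : continuous projy.
Proof.
move=> q; apply: (@cvg_pair _ _ _ _ (nbhs q.1.2) (nbhs q.2)); last exact: cvg_snd.
by apply: (@continuous_comp _ _ _ fst snd); [exact: cvg_fst | exact: cvg_snd].
Qed.

Variable F : U -> R.

Definition gF (p : U) : R := F p - p.1 ord0 ord0.

Definition straighten : V -> V := shear (gF \o projx) cy \o shear (gF \o projy) cx.

Lemma straightenE (q : V) :
  let a := gF (projy q) in let b := gF (q.1.1 + a *: e1, q.2) in
  straighten q = ((q.1.1 + a *: e1, q.1.2 + b *: e1), q.2).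
Proof.
move=> a b; rewrite /straighten /shear /projx /projy /=.
apply: injective_projections; first apply: injective_projections.
all: by rewrite /= ?scaler0 ?addr0.
Qed.

Lemma straighten_snd (q : V) : (straighten q).2 = q.2.
Proof. by rewrite straightenE. Qed.

Lemma straighten_diff (q : V) :
  let a := gF (projy q) in let b := gF (q.1.1 + a *: e1, q.2) in
  b = 0 \/ a = 0 /\ gF (q.1.2 + b *: e1, q.2) = 0 ->
  F ((straighten q).1.1, q.2) - F ((straighten q).1.2, q.2) =
  q.1.1 ord0 ord0 - q.1.2 ord0 ord0.
Proof.
move=> a b ab0; rewrite straightenE /=.
have FE p : F p = p.1 ord0 ord0 + gF p by rewrite /gF addrC subrK.
have e1E (x : X) c : (x + c *: e1) ord0 ord0 = x ord0 ord0 + c.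
  by rewrite !mxE !eqxx mulr1.
rewrite !FE /= !e1E -/a -/b; case: ab0 => [b0 | [a0 gy0]].
  by rewrite b0 scale0r !addr0 -[gF (_, _)]/a opprD addrACA subrr addr0.
by rewrite gy0 a0 !addr0 opprD addrACA subrr addr0.
Qed.

Hypothesis sF : smooth F.

Lemma smooth_gF : smooth gF.
Proof.
apply: (smooth_add sF); apply: smooth_linear.
  by move=> a p p'; rewrite /= !mxE opprD scalerN.
move=> p; apply: continuousN.
apply: (@continuous_comp _ _ _ fst (fun x : X => x ord0 ord0)); first exact: cvg_fst.
exact: coord_continuous.
Qed.

Lemma diffeomorphism_straighten : diffeomorphism straighten.
Proof.
apply: diffeomorphism_shear_comp.
- exact: smooth_comp_linear smooth_gF linear_projy continuous_projy.
- exact: smooth_comp_linear smooth_gF linear_projx continuous_projx.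
- by move=> q r; rewrite /= /projy /= !scaler0 !addr0.
- by move=> q r; rewrite /= /projx /= !scaler0 !addr0.
Qed.

Definition join_fibers (r : U * U) : V := ((r.1.1, r.2.1), r.1.2).

Lemma continuous_join_fibers : continuous join_fibers.
Proof.
move=> r; apply: (@cvg_pair _ _ _ _ (nbhs (r.1.1, r.2.1)) (nbhs r.1.2)).
  apply: (@cvg_pair _ _ _ _ (nbhs r.1.1) (nbhs r.2.1)).
    by apply: (@continuous_comp _ _ _ fst fst); exact: cvg_fst.
  by apply: (@continuous_comp _ _ _ snd fst); [exact: cvg_snd | exact: cvg_fst].
by apply: (@continuous_comp _ _ _ fst snd); [exact: cvg_fst | exact: cvg_snd].
Qed.

Lemma straighten_diff_outside_compact {K : set U} :
  compact K -> (forall p, ~ K p -> F p = p.1 ord0 ord0) ->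
  exists2 Kc : set V, compact Kc & forall q, ~ Kc q ->
    F ((straighten q).1.1, q.2) - F ((straighten q).1.2, q.2) =
    q.1.1 ord0 ord0 - q.1.2 ord0 ord0.
Proof.
move=> cK FK.
have gF0 p : ~ K p -> gF p = 0 by move=> /FK Fp; rewrite /gF Fp subrr.
have [M gFM] := compact_support_bounded cK (smooth_continuous smooth_gF) gF0.
have M0 : `|0 : R| <= M by apply: le_trans (gFM 0); rewrite normr0.
have [K1 cK1 K1P] := compact_line_thickening ((e1, 0) : U) M cK.
have {}K1P (x : X) t c : `|c| <= M -> K (x + c *: e1, t) -> K1 (x, t).
  move=> cM Kxc; apply: K1P cM _; congr K: Kxc.
  by apply: injective_projections; rewrite /= ?scaler0 ?addr0.
exists (join_fibers @` (K1 `*` K1)).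
  apply: continuous_compact; last exact: compact_setX.
  exact/continuous_subspaceT/continuous_join_fibers.
move=> q nKc; apply: straighten_diff.
set a := gF (projy q); set b := gF (q.1.1 + a *: e1, q.2).
have [Kx|nKx] := pselect (K (q.1.1 + a *: e1, q.2)); last by left; exact: gF0.
have nK1y : ~ K1 (projy q).
  move=> K1y; apply: nKc; exists (projx q, projy q).
    by split=> //; exact: K1P (gFM _) Kx.
  by apply: injective_projections => //; exact: injective_projections.
right; split; apply: gF0 => Ky; apply: nK1y; last exact: K1P (gFM _) Ky.
by apply: (K1P _ _ 0 M0); rewrite scale0r addr0.
Qed.

End Straightening.

Theorem proposition6p6 (R : realType) (N : nat) (F : 'rV[R]_N.+1 * R -> R) :
  gen_family_knot F ->
  (exists K : set ('rV[R]_N.+1 * R), compact K /\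
     forall p, ~ K p -> F p = p.1 ord0 ord0) ->
  let w := fun q : ('rV[R]_N.+1 * 'rV[R]_N.+1) * R =>
             F (q.1.1, q.2) - F (q.1.2, q.2) in
  exists (phi : ('rV[R]_N.+1 * 'rV[R]_N.+1) * R -> ('rV[R]_N.+1 * 'rV[R]_N.+1) * R)
         (Phi : ('rV[R]_N.+1 * 'rV[R]_N.+1) * R -> 'rV[R]_N.+1 * 'rV[R]_N.+1),
    diffeomorphism phi /\
    (forall q, phi q = (Phi q, q.2)) /\
    exists K : set (('rV[R]_N.+1 * 'rV[R]_N.+1) * R), compact K /\
      forall q, ~ K q -> (w \o phi) q = q.1.1 ord0 ord0 - q.1.2 ord0 ord0.
Proof.
move=> [sF _ _ _ _] [K [cK FK]] w.
have [Kc cKc straightenKc] := straighten_diff_outside_compact F sF cK FK.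
exists (straighten F), (fun q => (straighten F q).1).
split; first exact: diffeomorphism_straighten F sF.
split; first by move=> q; rewrite -(straighten_snd F q) -surjective_pairing.
by exists Kc; split=> // q /straightenKc <-; rewrite /w /comp straighten_snd.
Qed.
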